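(* Let $C=(C_1,C_2)$ be an equitable partition of $J(n,w)$ with quotient matrix $\begin{pmatrix} a & b\\ c& d\end{pmatrix}$, where $b+c>0$, and let $f=\chi_{C_1}$. Then $$\frac{bc}{b+c}\binom{n}{w}=\sum_{1\le i<j\le n}|S(f_{i,j})|,$$ where $S(f_{i,j})$ denotes the support (set of nonzeros) of the partial difference $f_{i,j}$.
   Context: The Johnson graph $J(n,w)$ has as vertices the binary vectors of length $n$ with exactly $w$ ones; two vertices are adjacent iff they have exactly $w-1$ common ones. An equitable partition $(C_1,C_2)$ with quotient matrix $(s_{ij})$: every vertex of $C_i$ has exactly $s_{ij}$ neighbours in $C_j$. $\chi_{C_1}$ is the characteristic function of $C_1$. For $f:J(n,w)\to\mathbb{R}$ and $i<j$, the partial difference $f_{i,j}:J(n-2,w-1)\to\mathbb{R}$ is $f_{i,j}(y)=f(y^{(1,0)})-f(y^{(0,1)})$, where $y$ is indexed by $\{1,\dots,n\}\setminus\{i,j\}$ and $y^{(a,b)}$ is obtained by inserting $a$ at position $i$ and $b$ at position $j$. *)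

From mathcomp Require Import all_boot all_order all_algebra.
Set Implicit Arguments. Unset Strict Implicit. Unset Printing Implicit Defensive.
Import Order.TTheory GRing.Theory Num.Theory.
Local Open Scope ring_scope.

(* Vertices of J(n,w): binary vectors of length n with w ones, represented
   by their supports, i.e. subsets of 'I_n of size w. *)
Definition JV (n w : nat) : {set {set 'I_n}} := [set x : {set 'I_n} | #|x| == w].

Definition Jadj (n w : nat) (x y : {set 'I_n}) : bool :=
  [&& x \in JV n w, y \in JV n w, x != y & (#|x :&: y|.+1 == w)%N].

Definition nbrs_in (n w : nat) (x : {set 'I_n}) (C : {set {set 'I_n}}) : nat :=
  #|[set y in C | Jadj w x y]|.

Definition is_partition2 (n w : nat) (C1 C2 : {set {set 'I_n}}) : Prop :=
  C1 :|: C2 = JV n w /\ C1 :&: C2 = set0.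

Definition equitable2 (n w : nat) (C1 C2 : {set {set 'I_n}}) (a b c d : nat) : Prop :=
  is_partition2 w C1 C2 /\
  (forall x, x \in C1 -> nbrs_in w x C1 = a /\ nbrs_in w x C2 = b) /\
  (forall x, x \in C2 -> nbrs_in w x C1 = c /\ nbrs_in w x C2 = d).

Definition chi (n : nat) (C : {set {set 'I_n}}) (x : {set 'I_n}) : rat :=
  (x \in C)%:R.

(* Vertices of J(n-2,w-1) on the coordinates {1..n}\{i,j}: subsets Y of
   'I_n avoiding i and j, with |Y| = w-1 (empty when w = 0). *)
Definition Jminor (n w : nat) (i j : 'I_n) : {set {set 'I_n}} :=
  [set Y : {set 'I_n} | [&& i \notin Y, j \notin Y & (#|Y|.+1 == w)%N]].

(* partial difference f_{i,j}(y) = f(y^(1,0)) - f(y^(0,1)) *)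
Definition pdiff (n : nat) (f : {set 'I_n} -> rat) (i j : 'I_n) (Y : {set 'I_n}) : rat :=
  f (i |: Y) - f (j |: Y).

Definition pdiff_support (n w : nat) (f : {set 'I_n} -> rat) (i j : 'I_n)
  : {set {set 'I_n}} :=
  [set Y in Jminor w i j | pdiff f i j Y != 0].

(* Let E be the set of ordered pairs (x, y) of adjacent vertices with x in C1
   and y in C2.  Counting E from either side gives |E| = b|C1| = c|C2|, hence
   (b + c)|E| = bc(|C1| + |C2|) = bc binom(n, w).  On the other hand an edge
   (x, y) is the same thing as a triple (i, j, Y) with x = Y + {i}, y = Y + {j} and
   Y a vertex of J(n-2, w-1) avoiding i and j; for i < j, Y lies in the
   support of f_{i,j} exactly when one of (i, j, Y), (j, i, Y) is such an edge
   of E.  So the sum of the support sizes is |E| as well. *)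

From mathcomp Require Import all_boot all_order all_algebra.
From mathcomp Require Import zify ring.
Set Implicit Arguments. Unset Strict Implicit. Unset Printing Implicit Defensive.
Import Order.TTheory GRing.Theory Num.Theory.
Local Open Scope ring_scope.

Lemma card_pairs (T1 T2 : finType) (P : T1 -> T2 -> bool) :
  #|[set p : T1 * T2 | P p.1 p.2]| = (\sum_x #|[set y | P x y]|)%N.
Proof.
rewrite -sum1dep_card -(pair_big_dep xpredT P (fun _ _ => 1%N)) /=.
by apply: eq_bigr => x _; rewrite sum1dep_card.
Qed.

Lemma sum_ltn_sym n (F : 'I_n -> 'I_n -> nat) : (forall i, F i i = 0%N) ->
  (\sum_(i < n) \sum_(j < n | i < j) (F i j + F j i) =
   \sum_(i < n) \sum_(j < n) F i j)%N.
Proof.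
move=> F0; under eq_bigr do rewrite big_split.
rewrite big_split /= [X in (_ + X)%N](exchange_big_dep xpredT) //=.
under [X in (_ + X)%N]eq_bigr do rewrite big_mkcond.
under [X in (X + _)%N]eq_bigr do rewrite big_mkcond.
rewrite -big_split; apply: eq_bigr => i _; rewrite -big_split.
apply: eq_bigr => j _ /=.
by case: ltngtP => [||/val_inj->]; rewrite ?addn0 ?F0.
Qed.

Lemma setU1I_neq (T : finType) (i j : T) (Y : {set T}) :
  i != j -> (i |: Y) :&: (j |: Y) = Y.
Proof.
move=> neq_ij; rewrite -setUIl (_ : [set i] :&: [set j] = set0) ?set0U //.
by apply/setP => z; rewrite !inE; apply/negbTE; apply: contra neq_ij => /andP[/eqP-> /eqP->].
Qed.

Lemma setU1_notin_inj (T : finType) (i i' : T) (Y : {set T}) :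
  i \notin Y -> i |: Y = i' |: Y -> i = i'.
Proof. by move=> iY /setP/(_ i); rewrite !inE eqxx (negbTE iY) !orbF => /esym/eqP. Qed.

Section JohnsonGraph.
Variables n w : nat.
Implicit Types (x y Y : {set 'I_n}) (A B : {set {set 'I_n}}).

Lemma card_JV : #|JV n w| = 'C(n, w).
Proof. by rewrite card_draws card_ord. Qed.

Lemma Jadj_sym x y : Jadj w x y = Jadj w y x.
Proof. by rewrite /Jadj setIC eq_sym; case: (x \in _); case: (y \in _). Qed.

Lemma Jminor_sym (i j : 'I_n) : Jminor w i j = Jminor w j i.
Proof. by apply/setP => Y; rewrite !inE andbCA. Qed.

Lemma setU1_JV (i j : 'I_n) Y : Y \in Jminor w i j -> i |: Y \in JV n w.
Proof. by rewrite !inE => /and3P[iY _ /eqP <-]; rewrite cardsU1 iY. Qed.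

Lemma setU1_Jadj (i j : 'I_n) Y :
  i != j -> Y \in Jminor w i j -> Jadj w (i |: Y) (j |: Y).
Proof.
move=> neq_ij YJ; have YJ' : Y \in Jminor w j i by rewrite Jminor_sym.
rewrite /Jadj (setU1_JV YJ) (setU1_JV YJ').
rewrite setU1I_neq //; move: YJ; rewrite !inE => /and3P[iY _ ->] /=; rewrite andbT.
by apply: contra neq_ij => /eqP/setP/(_ i); rewrite !inE eqxx (negbTE iY) !orbF => <-.
Qed.

Lemma Jadj_setU1 x y : Jadj w x y ->
  exists i j, [/\ i != j, x :&: y \in Jminor w i j, x = i |: (x :&: y) & y = j |: (x :&: y)].
Proof.
case/and4P; rewrite !inE => /eqP cx /eqP cy _ /eqP cxy.
have /cards1P[i xDy] : #|x :\: y| == 1%N by rewrite cardsD cx -cxy; apply/eqP; lia.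
have /cards1P[j yDx] : #|y :\: x| == 1%N by rewrite cardsD setIC cy -cxy; apply/eqP; lia.
have /setDP[ix iNy] : i \in x :\: y by rewrite xDy set11.
have /setDP[jy jNx] : j \in y :\: x by rewrite yDx set11.
exists i, j; split.
- by apply: contraNneq jNx => <-.
- by rewrite !inE cxy eqxx !negb_and iNy jNx orbT.
- by rewrite -xDy setUC setID.
- by rewrite -yDx setUC setIC setID.
Qed.

Definition cut_edges A B : {set {set 'I_n} * {set 'I_n}} :=
  [set p | [&& p.1 \in A, p.2 \in B & Jadj w p.1 p.2]].

Lemma card_cut_edges A B k : (forall x, x \in A -> nbrs_in w x B = k) ->
  #|cut_edges A B| = (#|A| * k)%N.
Proof.
move=> regA; rewrite (card_pairs (fun x y => [&& x \in A, y \in B & Jadj w x y])).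
rewrite -sum_nat_const [RHS]big_mkcond /=.
apply: eq_bigr => x _; case: ifP => [xA | _].
  by rewrite -(regA x xA); congr #|_|; apply/setP => y; rewrite !inE.
by apply/eqP; rewrite cards_eq0; apply/eqP/setP => y; rewrite !inE.
Qed.

Lemma card_cut_edgesC A B : #|cut_edges A B| = #|cut_edges B A|.
Proof.
have -> : cut_edges B A = swap_pair @: cut_edges A B.
  apply/setP => -[y x]; rewrite !inE /=; apply/idP/imsetP => [|[[x' y'] + [-> ->]]].
    by case/and3P => yB xA adj; exists (x, y); rewrite // inE /= xA yB Jadj_sym.
  by rewrite inE /= => /and3P[xA yB adj]; rewrite xA yB Jadj_sym.
by rewrite card_imset //; apply: can_inj swap_pairK.
Qed.

Section Partition.
Variables C1 C2 : {set {set 'I_n}}.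
Hypothesis partC : is_partition2 w C1 C2.

Lemma partition2_inC2 x : x \in JV n w -> (x \in C2) = (x \notin C1).
Proof.
case: partC => CU CI xJ.
have : (x \in C1) || (x \in C2) by rewrite -in_setU CU.
have : ~~ ((x \in C1) && (x \in C2)) by rewrite -in_setI CI inE.
by case: (x \in C1); case: (x \in C2).
Qed.

Lemma partition2_card : (#|C1| + #|C2|)%N = 'C(n, w).
Proof.
case: partC => CU CI.
by rewrite -card_JV -CU cardsU CI cards0 subn0.
Qed.

Definition cut_minor (i j : 'I_n) : {set {set 'I_n}} :=
  [set Y in Jminor w i j | (i |: Y \in C1) && (j |: Y \in C2)].

Lemma cut_minor_neq (i j : 'I_n) Y : Y \in cut_minor i j -> i != j.
Proof.
case/setIdP => YJ /andP[iC1 jC2]; apply: contraTneq jC2 => <-.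
by rewrite partition2_inC2 ?iC1 // (setU1_JV YJ).
Qed.

Lemma cut_minor_diag (i : 'I_n) : cut_minor i i = set0.
Proof. by apply/setP => Y; rewrite in_set0; apply/negbTE/negP => /cut_minor_neq; rewrite eqxx. Qed.

Lemma in_cut_minor (i j : 'I_n) Y :
  (Y \in cut_minor i j) = [&& Y \in Jminor w i j, i |: Y \in C1 & j |: Y \in C2].
Proof. by rewrite in_set. Qed.

Lemma pdiff_support_chi (i j : 'I_n) :
  pdiff_support w (chi C1) i j = cut_minor i j :|: cut_minor j i.
Proof.
apply/setP => Y; rewrite in_set in_setU !in_cut_minor -(Jminor_sym i j) -andb_orr.
case/boolP: (Y \in Jminor w i j) => //= YJ.
have YJ' : Y \in Jminor w j i by rewrite Jminor_sym.
rewrite !partition2_inC2 ?(setU1_JV YJ) ?(setU1_JV YJ') /pdiff /chi //.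
by case: (i |: Y \in C1); case: (j |: Y \in C1); rewrite ?subrr ?subr0 ?sub0r ?oppr_eq0 ?oner_eq0.
Qed.

Lemma card_pdiff_support_chi (i j : 'I_n) :
  #|pdiff_support w (chi C1) i j| = (#|cut_minor i j| + #|cut_minor j i|)%N.
Proof.
rewrite pdiff_support_chi cardsU (_ : _ :&: _ = set0) ?cards0 ?subn0 //.
apply/setP => Y; rewrite in_setI !in_cut_minor in_set0.
apply/negbTE/andP => -[/and3P[YJ iC1 _] /and3P[_ _]].
by rewrite partition2_inC2 ?iC1 ?(setU1_JV YJ).
Qed.

Lemma sum_card_cut_minor :
  (\sum_(i < n) \sum_(j < n) #|cut_minor i j|)%N = #|cut_edges C1 C2|.
Proof.
pose triples := [set t : 'I_n * 'I_n * {set 'I_n} | t.2 \in cut_minor t.1.1 t.1.2].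
pose edge (t : 'I_n * 'I_n * {set 'I_n}) := (t.1.1 |: t.2, t.1.2 |: t.2).
have in_triples t : (t \in triples) = (t.2 \in cut_minor t.1.1 t.1.2) by rewrite in_set.
have -> : (\sum_i \sum_j #|cut_minor i j|)%N = #|triples|.
  rewrite (card_pairs (fun ij Y => Y \in cut_minor ij.1 ij.2)) pair_big.
  by apply: eq_bigr => p _; apply: eq_card => Y; rewrite !inE.
have edge_inj : {in triples &, injective edge}.
  move=> [[i j] Y] [[i' j'] Y']; rewrite !in_triples /= => tY tY' [ex ey].
  have eY : Y = Y'.
    by rewrite -(setU1I_neq Y (cut_minor_neq tY)) -(setU1I_neq Y' (cut_minor_neq tY')) ex ey.
  subst Y'; move: tY; rewrite in_cut_minor inE => /andP[/and3P[iY jY _] _].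
  by rewrite (setU1_notin_inj iY ex) (setU1_notin_inj jY ey).
have -> : cut_edges C1 C2 = edge @: triples.
  apply/setP => -[x y]; rewrite in_set /=; apply/idP/imsetP => [|[[[i j] Y]]].
    case/and3P => xC1 yC2 /Jadj_setU1[i [j [neq_ij YJ ex ey]]].
    exists (i, j, x :&: y); last by rewrite /edge /= -ex -ey.
    by rewrite in_triples in_cut_minor -ex -ey xC1 yC2 YJ.
  rewrite in_triples /= => /[dup] /cut_minor_neq neq_ij.
  by rewrite in_cut_minor /edge => /and3P[YJ iC1 jC2] /= [-> ->]; rewrite iC1 jC2 setU1_Jadj.
by rewrite (card_in_imset edge_inj).
Qed.

End Partition.
End JohnsonGraph.

Theorem lemma4 (n w : nat) (C1 C2 : {set {set 'I_n}}) (a b c d : nat) :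
  equitable2 w C1 C2 a b c d -> (0 < b + c)%N ->
  (b * c)%:R / (b + c)%:R * ('C(n, w))%:R =
  ((\sum_(i < n) \sum_(j < n | (i < j)%N) #|pdiff_support w (chi C1) i j|)%N)%:R
    :> rat.
Proof.
move=> [partC [regC1 regC2]] bc_gt0.
have cutC1 : #|cut_edges w C1 C2| = (#|C1| * b)%N.
  by apply: card_cut_edges => x /regC1[].
have cutC2 : #|cut_edges w C1 C2| = (#|C2| * c)%N.
  by rewrite card_cut_edgesC; apply: card_cut_edges => x /regC2[].
have -> : (\sum_(i < n) \sum_(j < n | i < j) #|pdiff_support w (chi C1) i j|)%N =
          #|cut_edges w C1 C2|.
  under eq_bigr do under eq_bigr do rewrite (card_pdiff_support_chi partC).
  by rewrite sum_ltn_sym ?(sum_card_cut_minor partC) // => i; rewrite (cut_minor_diag partC) cards0.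
have double_count : (#|cut_edges w C1 C2| * (b + c) = b * c * 'C(n, w))%N.
  by rewrite -(partition2_card partC); nia.
have bc_neq0 : (b + c)%:R != 0 :> rat by rewrite pnatr_eq0 -lt0n.
by rewrite -[RHS](mulfK bc_neq0) -natrM double_count !natrM; field; rewrite -natrD.
Qed.
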